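(* Let $q$ be a prime power and $m\in\mathbb N$. Then the subring $R=\mathbb F_q+t\,\mathbb F_{q^m}[[t]]$ of the power series ring $\mathbb F_{q^m}[[t]]$ is a U-FFD.
   Context: An integral domain is a U-FFD if every nonzero element that is a unit or a finite product of irreducibles has only finitely many factorizations into irreducibles, counted up to order and associates. *)

From HB Require Import structures.
From mathcomp Require Import all_boot all_order all_algebra.
From Stdlib Require Import List Permutation.
Set Implicit Arguments. Unset Strict Implicit. Unset Printing Implicit Defensive.
Import GRing.Theory.
Local Open Scope ring_scope.

Section Fact.
Variables (T : Type) (D : T -> Prop) (mul : T -> T -> T) (one zero : T).

Definition isUnit (a : T) : Prop :=
  D a /\ exists b, D b /\ mul a b = one.

Definition isIrreducible (a : T) : Prop :=
  D a /\ a <> zero /\ ~ isUnit a /\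
  forall b c, D b -> D c -> a = mul b c -> isUnit b \/ isUnit c.

Definition associated (a b : T) : Prop :=
  exists u, isUnit u /\ b = mul u a.

Definition prodL (s : list T) : T := fold_right mul one s.

(* a factorization of a: a finite list of irreducibles whose product is
   a up to a unit factor (the empty list is the factorization of a unit) *)
Definition isFactorization (a : T) (s : list T) : Prop :=
  Forall isIrreducible s /\ associated (prodL s) a.

Definition factEquiv (s t : list T) : Prop :=
  exists t', Permutation t t' /\ Forall2 associated s t'.

Definition finitelyManyFactorizations (a : T) : Prop :=
  exists S : list (list T), forall s, isFactorization a s ->
    exists2 s0, In s0 S & factEquiv s s0.

Definition U_FFD : Prop :=
  forall a, D a -> a <> zero ->
    (isUnit a \/ exists s, isFactorization a s) ->
    finitelyManyFactorizations a.
End Fact.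

Definition pseries (L : comRingType) := nat -> L.

Definition ps_mul (L : comRingType) (f g : pseries L) : pseries L :=
  fun n => \sum_(i < n.+1) f i * g (n - i)%N.
Definition ps_one (L : comRingType) : pseries L := fun n => if n == 0%N then 1 else 0.
Definition ps_zero (L : comRingType) : pseries L := fun _ => 0.

(* The subring K + t L[[t]] of L[[t]]: series whose constant term is in K *)
Definition KtL (L : comRingType) (K : {pred L}) (f : pseries L) : Prop :=
  f 0%N \in K.

From Stdlib Require Import List Permutation ClassicalDescription FunctionalExtensionality.
From mathcomp Require Import all_boot all_order all_algebra zify.
Set Implicit Arguments. Unset Strict Implicit. Unset Printing Implicit Defensive.
Import GRing.Theory.
Local Open Scope ring_scope.

(** Every nonzero series [f] of order [k] is [t^k] times a series with nonzero
    constant term, hence associated in [K + tL[[t]]] to the monomial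
    [f_k t^k].  Non-units of [K + tL[[t]]] have positive order and orders add
    up under multiplication, so a factorization of [a] has at most [ord a]
    factors, each associated to one of the finitely many monomials [c t^k]
    with [c] in the finite field [L] and [k <= ord a]. *)

Section BoundedFactorizations.
Variables (T : Type) (D : T -> Prop) (mul : T -> T -> T) (one zero : T).

Fixpoint lists_upto (X : list T) (n : nat) : list (list T) :=
  match n with
  | 0 => [:: nil]
  | m.+1 => nil :: flat_map (fun x => List.map (cons x) (lists_upto X m)) X
  end.

Lemma In_lists_upto (X : list T) n s :
  (length s <= n)%N -> incl s X -> In s (lists_upto X n).
Proof.
elim: n s => [|n IH] [|x s] //= Hlen Hincl; try by left.
right; apply/in_flat_map; exists x; split; first by apply: Hincl; left.
apply/in_map; apply: IH => //; exact: (incl_cons_inv Hincl).2.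
Qed.

Lemma Forall2_associated_incl (X s : list T) :
  (forall f, In f s -> exists2 x, In x X & associated D mul one f x) ->
  exists t, Forall2 (associated D mul one) s t /\ incl t X.
Proof.
elim: s => [|f s IH] Hs; first by exists nil; split; [constructor | exact: incl_nil_l].
have [x Xx fx] := Hs f (or_introl erefl).
have [t [st tX]] := IH (fun g Hg => Hs g (or_intror Hg)).
by exists (x :: t); split; [constructor | exact: incl_cons].
Qed.

Lemma finitelyManyFactorizations_bounded (a : T) (X : list T) (n : nat) :
  (forall s, isFactorization D mul one zero a s ->
     (length s <= n)%N /\
     forall f, In f s -> exists2 x, In x X & associated D mul one f x) ->
  finitelyManyFactorizations D mul one zero a.
Proof.
move=> Hbound; exists (lists_upto X n) => s /Hbound [Hlen HX].
have [t [st tX]] := Forall2_associated_incl HX.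
exists t; last by exists t; split; [exact: Permutation_refl | exact: st].
by apply: In_lists_upto => //; rewrite -(Forall2_length st).
Qed.

End BoundedFactorizations.

Lemma In_mem (T : eqType) (x : T) (s : seq T) : x \in s -> In x s.
Proof. by elim: s => //= y s IH; rewrite in_cons => /orP [/eqP ->|/IH]; [left|right]. Qed.

Lemma size_le_sumn (s : seq nat) : (forall n, In n s -> 0 < n)%N -> (size s <= sumn s)%N.
Proof.
elim: s => //= n s IH Hpos.
have := Hpos n (or_introl erefl); have := IH (fun m Hm => Hpos m (or_intror Hm)); lia.
Qed.

Lemma In_le_sumn (s : seq nat) n : In n s -> (n <= sumn s)%N.
Proof. elim: s => //= m s IH [<-|/IH]; lia. Qed.

Section PowerSeries.
Variable R : comNzRingType.
Local Notation ps := (pseries R).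

Lemma ps_mulC (f g : ps) : ps_mul f g = ps_mul g f.
Proof.
apply: functional_extensionality => n; rewrite /ps_mul (reindex_inj rev_ord_inj) /=.
by apply: eq_bigr => i _; rewrite subSS subKn ?(mulrC (f _)) // -ltnS.
Qed.

Lemma ps_mul_coef0 (f g : ps) : ps_mul f g 0 = f 0%N * g 0%N.
Proof. by rewrite /ps_mul big_ord1. Qed.

Lemma ps_mul_eq1_coef0 (u b : ps) : ps_mul u b = ps_one R -> u 0%N * b 0%N = 1.
Proof. by move=> /(congr1 (fun f => f 0%N)); rewrite ps_mul_coef0. Qed.

Lemma ps_one_neq0 : ps_one R <> ps_zero R.
Proof. by move=> /(congr1 (fun f => f 0%N))/eqP; rewrite oner_eq0. Qed.

Definition ps_shift (k : nat) (g : ps) : ps :=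
  fun n => if (n < k)%N then 0 else g (n - k)%N.

Lemma ps_shift0 (g : ps) : ps_shift 0 g = g.
Proof. by apply: functional_extensionality => n; rewrite /ps_shift subn0. Qed.

Lemma ps_mul_shift (w g : ps) k :
  ps_mul w (ps_shift k g) = ps_shift k (ps_mul w g).
Proof.
apply: functional_extensionality => n; elim: k n => [|k IH] n.
  by rewrite !ps_shift0.
case: n => [|n]; first by rewrite ps_mul_coef0 /ps_shift /= mulr0.
rewrite /ps_mul big_ord_recr /= {2}/ps_shift subnn /= mulr0 addr0 -/(ps_mul _ _ _).
rewrite -[RHS]IH /ps_mul /ps_shift /=; apply: eq_bigr => i _.
by rewrite subSn ?ltnS ?subSS // -ltnS.
Qed.

Lemma ps_mul_low (f g : ps) p q :
  (forall i, (i < p)%N -> f i = 0) -> (forall j, (j < q)%N -> g j = 0) ->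
  (forall n, (n < p + q)%N -> ps_mul f g n = 0) /\ ps_mul f g (p + q)%N = f p * g q.
Proof.
move=> Hf Hg; have vanish i j : (i < p)%N || (j < q)%N -> f i * g j = 0.
  by case/orP=> [/Hf|/Hg] ->; rewrite ?mul0r ?mulr0.
split=> [n Hn|].
  rewrite /ps_mul big1 // => i _; apply: vanish; have := ltn_ord i; lia.
have Hp : (p < (p + q).+1)%N by rewrite ltnS leq_addr.
rewrite /ps_mul (bigD1 (Ordinal Hp)) //= addKn big1 ?addr0 // => i Hi.
have /eqP ip : (i : nat) != p by apply: contraNneq Hi => Eip; apply/eqP/val_inj.
apply: vanish; have := ltn_ord i; lia.
Qed.

End PowerSeries.

Section Order.
Variable R : idomainType.
Local Notation ps := (pseries R).

Definition ps_order (f : ps) : nat :=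
  match excluded_middle_informative (exists n, f n != 0) with
  | left nz => ex_minn nz
  | right _ => 0%N
  end.

Lemma ps_neq0_coef (f : ps) : f <> ps_zero R -> exists n, f n != 0.
Proof.
move=> Hf; apply: not_all_not_ex => H; apply: Hf.
by apply: functional_extensionality => n; apply/eqP/negPn/negP/H.
Qed.

Lemma ps_orderP (f : ps) : f <> ps_zero R ->
  f (ps_order f) != 0 /\ forall i, (i < ps_order f)%N -> f i = 0.
Proof.
move=> /ps_neq0_coef nz; rewrite /ps_order; case: excluded_middle_informative => // {}nz.
case: ex_minnP => m fm m_min; split=> // i; apply: contraTeq => /m_min.
by rewrite leqNgt.
Qed.

Lemma ps_order_unique (f : ps) k :
  f k != 0 -> (forall i, (i < k)%N -> f i = 0) -> ps_order f = k.
Proof.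
move=> fk f_low; have nz : f <> ps_zero R by move=> E; rewrite E eqxx in fk.
have [ford ford_low] := ps_orderP nz.
case: (ltngtP (ps_order f) k) => // [/f_low f0|/ford_low f0].
  by rewrite f0 eqxx in ford.
by rewrite f0 eqxx in fk.
Qed.

Lemma ps_mul_order (f g : ps) : f <> ps_zero R -> g <> ps_zero R ->
  ps_mul f g <> ps_zero R /\ ps_order (ps_mul f g) = (ps_order f + ps_order g)%N.
Proof.
move=> /ps_orderP [f_lead f_low] /ps_orderP [g_lead g_low].
have [fg_low fg_lead] := ps_mul_low f_low g_low.
have fg_nz : ps_mul f g (ps_order f + ps_order g)%N != 0 by rewrite fg_lead mulf_neq0.
by split; [move=> E; rewrite E eqxx in fg_nz | exact: ps_order_unique].
Qed.

Lemma ps_order_prod (s : list ps) : Forall (fun f => f <> ps_zero R) s ->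
  prodL (@ps_mul R) (ps_one R) s <> ps_zero R /\
  ps_order (prodL (@ps_mul R) (ps_one R) s) = sumn (List.map ps_order s).
Proof.
elim=> [|f t f_nz _ [P_nz P_order]] /=.
  by split; [exact: ps_one_neq0 | apply: ps_order_unique; rewrite ?oner_neq0].
by have [fP_nz ->] := ps_mul_order f_nz P_nz; rewrite P_order.
Qed.

Lemma ps_order_eq1 (u b : ps) : ps_mul u b = ps_one R -> ps_order u = 0%N.
Proof.
move=> /ps_mul_eq1_coef0 ub1; apply: ps_order_unique => //.
by apply: contra_eq_neq ub1 => ->; rewrite mul0r eq_sym oner_neq0.
Qed.

End Order.
Arguments ps_order {R} f.

Section Inverse.
Variable F : fieldType.
Local Notation ps := (pseries F).

(* The first [n.+1] coefficients of the inverse of [v], from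
   [\sum_(i <= n) g_i v_(n-i) = 0] for [n > 0]. *)
Fixpoint ps_inv_prefix (v : ps) (n : nat) : seq F :=
  match n with
  | 0 => [:: (v 0%N)^-1]
  | m.+1 => let s := ps_inv_prefix v m in
     rcons s (- (v 0%N)^-1 * \sum_(i < m.+1) s`_i * v (m.+1 - i)%N)
  end.

Definition ps_inv (v : ps) : ps := fun n => (ps_inv_prefix v n)`_n.

Lemma size_ps_inv_prefix v n : size (ps_inv_prefix v n) = n.+1.
Proof. by elim: n => //= n IH; rewrite size_rcons IH. Qed.

Lemma ps_inv_prefixE v n i : (i <= n)%N -> (ps_inv_prefix v n)`_i = ps_inv v i.
Proof.
move=> /subnKC <-; elim: (n - i)%N => [|d IH]; first by rewrite addn0.
by rewrite addnS /= nth_rcons size_ps_inv_prefix ltnS leq_addr.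
Qed.

Lemma ps_mulVr (v : ps) : v 0%N != 0 -> ps_mul (ps_inv v) v = ps_one F.
Proof.
move=> v0; apply: functional_extensionality => -[|m].
  by rewrite ps_mul_coef0 /ps_inv /= mulVf.
rewrite /ps_mul big_ord_recr /= subnn {2}/ps_inv /= nth_rcons size_ps_inv_prefix ltnn eqxx.
under eq_bigr => i _ do rewrite -(ps_inv_prefixE v (ltnSE (ltn_ord i))).
by rewrite /ps_one /= mulrAC mulNr mulVf // mulN1r subrr.
Qed.

End Inverse.

Definition ps_monomial (R : comNzRingType) (c : R) (k : nat) : pseries R :=
  fun n => if n == k then c else 0.

Section SubringKtL.
Variables (F : fieldType) (K : {pred F}) (HK : GRing.divring_closed K).
Local Notation ps := (pseries F).
Local Notation D := (KtL K).
Local Notation isUnitK := (isUnit D (@ps_mul F) (ps_one F)).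
Local Notation associatedK := (associated D (@ps_mul F) (ps_one F)).

Let K1 : 1 \in K. Proof. by case: HK. Qed.

Let KV x : x \in K -> x^-1 \in K.
Proof. by case: HK => _ _ Kdiv xK; rewrite -div1r Kdiv. Qed.

Lemma KtL_unit (f : ps) : f 0%N \in K -> f 0%N != 0 -> isUnitK f.
Proof.
move=> f0K f0; split=> //; exists (ps_inv f); split; last by rewrite ps_mulC ps_mulVr.
exact: KV.
Qed.

Lemma ps_associated_monomial (f : ps) : f <> ps_zero F ->
  associatedK f (ps_monomial (f (ps_order f)) (ps_order f)).
Proof.
move=> /ps_orderP [f_lead f_low]; set k := ps_order f; set c := f k.
set v : ps := fun n => f (n + k)%N.
have fE : f = ps_shift k v.
  apply: functional_extensionality => n; rewrite /ps_shift /v.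
  by case: ltnP => [/f_low|/subnK ->].
have v0 : v 0%N != 0 by rewrite /v add0n.
exists (fun n => c * ps_inv v n); split.
  have w0 : c * ps_inv v 0%N = 1 by rewrite /ps_inv /= /v add0n mulfV.
  by apply: KtL_unit; rewrite w0 ?oner_neq0.
rewrite fE ps_mul_shift; apply: functional_extensionality => n.
have -> : ps_mul (fun n => c * ps_inv v n) v = fun n => c * ps_one F n.
  rewrite -(ps_mulVr v0); apply: functional_extensionality => m.
  by rewrite /ps_mul big_distrr; apply: eq_bigr => i _ /=; rewrite mulrA.
rewrite /ps_monomial /ps_shift /ps_one; case: ltngtP => [||->]; rewrite ?subnn ?mulr1 //.
by move=> kn; rewrite subn_eq0 leqNgt kn mulr0.
Qed.

Lemma irreducible_order_gt0 (f : ps) :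
  isIrreducible D (@ps_mul F) (ps_one F) (ps_zero F) f -> (0 < ps_order f)%N.
Proof.
move=> [Df [f_nz [f_nunit _]]]; rewrite lt0n; apply/eqP => f_order0; apply: f_nunit.
by apply: KtL_unit => //; rewrite -f_order0; case: (ps_orderP f_nz).
Qed.

Lemma factorization_order (a : ps) (s : list ps) :
  isFactorization D (@ps_mul F) (ps_one F) (ps_zero F) a s ->
  sumn (List.map ps_order s) = ps_order a.
Proof.
move=> [s_irr [u [[_ [b [_ ub1]]] ->]]].
have s_nz : Forall (fun f => f <> ps_zero F) s by apply: Forall_impl s_irr => f [_ []].
have [P_nz <-] := ps_order_prod s_nz.
have u_nz : u <> ps_zero F.
  by move=> u0; move/ps_mul_eq1_coef0: ub1; rewrite u0 mul0r => /eqP; rewrite eq_sym oner_eq0.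
by rewrite (ps_mul_order u_nz P_nz).2 (ps_order_eq1 ub1).
Qed.
End SubringKtL.

Definition ps_monomials_upto (L : finFieldType) (N : nat) : list (pseries L) :=
  flat_map (fun c => List.map (ps_monomial c) (iota 0 N.+1)) (enum L).

Lemma In_ps_monomials_upto (L : finFieldType) (c : L) k N :
  (k <= N)%N -> In (ps_monomial c k) (ps_monomials_upto L N).
Proof.
move=> kN; apply/in_flat_map; exists c; split; first by apply: In_mem; rewrite mem_enum.
by apply/in_map/In_mem; rewrite mem_iota add0n ltnS.
Qed.

Theorem mainTheorem10 (L : finFieldType) (K : {pred L})
  (HK : GRing.divring_closed K) :
  U_FFD (KtL K) (@ps_mul L) (@ps_one L) (@ps_zero L).
Proof.
move=> a _ _ _; pose N := ps_order a.
apply: (@finitelyManyFactorizations_bounded _ _ _ _ _ _ (ps_monomials_upto L N) N).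
move=> s s_fact; have sum_orders := factorization_order s_fact.
have s_irr f : In f s -> isIrreducible (KtL K) (@ps_mul L) (ps_one L) (ps_zero L) f.
  exact: (Forall_forall _ s).1 s_fact.1 f.
split.
  rewrite /N -sum_orders -(length_map ps_order); apply: size_le_sumn => n.
  by move=> /in_map_iff [f [<- /s_irr]]; apply: irreducible_order_gt0.
move=> f fs; exists (ps_monomial (f (ps_order f)) (ps_order f)).
  by apply: In_ps_monomials_upto; rewrite /N -sum_orders; apply/In_le_sumn/in_map.
by apply: ps_associated_monomial; have [_ []] := s_irr f fs.
Qed.
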